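(* Let $m,n$ be integers, let $G=\langle a,b\mid a w_k^n b=w_k^{n+1}\rangle$ where $w_k=(ab^{-1})^m ab(a^{-1}b)^m$, and let $r=w_k^n(ab^{-1})^m$. Then $G=\langle a,b\mid r=\overleftarrow{r}\rangle$.
   Context: For a word $u$ in the free group $F_{a,b}$, $\overleftarrow{u}$ denotes the word obtained from $u$ by writing its letters in reversed order (e.g. $\overleftarrow{ab^{-1}}=b^{-1}a$). The group $G$ is the link group $\pi_1(S^3-J(k,l))$ of the double twist link with $k=2m+1$, $l=2n+1$. *)

From mathcomp Require Import all_boot all_algebra.
Set Implicit Arguments. Unset Strict Implicit. Unset Printing Implicit Defensive.

Inductive gen := Ga | Gb.

(* a letter is a generator together with an exponent sign: false = x, true = x^-1 *)
Definition letter := (gen * bool)%type.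
Definition word := seq letter.

Definition ltr_inv (x : letter) : letter := (x.1, ~~ x.2).
Definition winv (w : word) : word := rev (map ltr_inv w).
Definition wrev (w : word) : word := rev w.

Fixpoint wpow_nat (w : word) (k : nat) : word :=
  if k is k'.+1 then w ++ wpow_nat w k' else [::].
Definition wpow (w : word) (z : int) : word :=
  match z with
  | Posz k => wpow_nat w k
  | Negz k => wpow_nat (winv w) k.+1
  end.

Definition wa : word := [:: (Ga, false)].
Definition wb : word := [:: (Gb, false)].

(* Word equality in the group <a, b | l = r>: the congruence on words generated
   by free cancellation and by replacing a subword l by r. Two presentations on
   the same generators define the same group iff these congruences coincide. *)
Inductive pres_eq (l r : word) : word -> word -> Prop :=
| pe_refl u : pres_eq l r u u
| pe_sym u v : pres_eq l r u v -> pres_eq l r v u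
| pe_trans u v w : pres_eq l r u v -> pres_eq l r v w -> pres_eq l r u w
| pe_free u v x : pres_eq l r (u ++ x :: ltr_inv x :: v) (u ++ v)
| pe_rel u v : pres_eq l r (u ++ l ++ v) (u ++ r ++ v).

Local Open Scope ring_scope.

Definition w_k (m : int) : word :=
  wpow (wa ++ winv wb) m ++ wa ++ wb ++ wpow (winv wa ++ wb) m.

Definition r_word (m n : int) : word := wpow (w_k m) n ++ wpow (wa ++ winv wb) m.

(* Write x = a b^-1, c = x^m and W = w_k, so that r = W^n c.  In the free group
   (a^-1 b)^m = a^-1 c^-1 a, hence W = c a c^-1 b = x c b c^-1 b, and since a and b are
   palindromes, rev c = b^-1 c b and rev W = (c^-1 b) W (c^-1 b)^-1.  Consequently
   a W^n b = x (b W^n b) and W^(n+1) = x (c b c^-1 b W^n), while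
   r = b^-1 (b W^n b) (b^-1 c) and rev r = b^-1 (c b c^-1 b W^n) (b^-1 c):
   both relations are conjugate to b W^n b = c b c^-1 b W^n, so they define the same group. *)
From mathcomp Require Import all_boot all_algebra zify.
From Stdlib Require Import Setoid Morphisms.

Set Implicit Arguments.
Unset Strict Implicit.
Unset Printing Implicit Defensive.
Local Open Scope ring_scope.

#[local] Hint Resolve pe_refl : core.

Lemma ltr_invK : involutive ltr_inv. Proof. by case=> g []. Qed.

Lemma winv_cat u v : winv (u ++ v) = winv v ++ winv u.
Proof. by rewrite /winv map_cat rev_cat. Qed.

Lemma winvK : involutive winv.
Proof. by move=> w; rewrite /winv map_rev revK (mapK ltr_invK). Qed.

Lemma wrev_cat u v : wrev (u ++ v) = wrev v ++ wrev u.
Proof. exact: rev_cat. Qed.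

Lemma wrev_winv w : wrev (winv w) = winv (wrev w).
Proof. by rewrite /wrev /winv map_rev. Qed.

Lemma wpow_natSr w k : wpow_nat w k.+1 = wpow_nat w k ++ w.
Proof. by elim: k => [|k IH]; rewrite /= ?cats0 // -catA -IH. Qed.

Lemma winv_wpow w z : winv (wpow w z) = wpow (winv w) z.
Proof.
have winv_wpow_nat k u : winv (wpow_nat u k) = wpow_nat (winv u) k.
  by elim: k => [|k IH] //=; rewrite winv_cat IH -wpow_natSr.
by case: z => k; exact: winv_wpow_nat.
Qed.

Lemma wrev_wpow w z : wrev (wpow w z) = wpow (wrev w) z.
Proof.
have wrev_wpow_nat k u : wrev (wpow_nat u k) = wpow_nat (wrev u) k.
  by elim: k => [|k IH] //=; rewrite wrev_cat IH -wpow_natSr.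
by case: z => k; rewrite /wpow wrev_wpow_nat ?wrev_winv.
Qed.

Section PresEq.
Context {l r : word}.
Notation E := (pres_eq l r).

#[global] Instance pres_eq_Equivalence : Equivalence E.
Proof. by split; [exact: pe_refl | exact: pe_sym | exact: pe_trans]. Qed.

Lemma pres_eq_ctx s t u v : E u v -> E (s ++ u ++ t) (s ++ v ++ t).
Proof.
elim=> {u v} [u|u v _ IH|u v w _ IH1 _ IH2|u v x|u v].
- reflexivity.
- by symmetry.
- by transitivity (s ++ v ++ t).
- by have := pe_free l r (s ++ u) (v ++ t) x; rewrite -!catA.
- by have := pe_rel l r (s ++ u) (v ++ t); rewrite -!catA.
Qed.

Lemma pres_eq_cat u u' v v' : E u u' -> E v v' -> E (u ++ v) (u' ++ v').
Proof.
move=> Hu Hv; transitivity (u' ++ v); first exact (pres_eq_ctx [::] v Hu).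
by have := pres_eq_ctx u' [::] Hv; rewrite !cats0.
Qed.

#[global] Instance cat_Proper : Proper (E ==> E ==> E) (@cat letter).
Proof. by move=> u u' Hu v v' Hv; exact: pres_eq_cat. Qed.

Lemma cancel_winvr w t : E (w ++ winv w ++ t) t.
Proof.
elim: w t => [|x w IH] t; first reflexivity.
rewrite -cat1s (winv_cat [:: x]) -!catA IH; exact: (pe_free l r [::]).
Qed.

Lemma cancel_winvl w t : E (winv w ++ w ++ t) t.
Proof. by have := cancel_winvr (winv w) t; rewrite winvK. Qed.

Lemma cat_winvr w : E (w ++ winv w) [::].
Proof. by have := cancel_winvr w [::]; rewrite cats0. Qed.

Lemma cat_winvl w : E (winv w ++ w) [::].
Proof. by have := cancel_winvl w [::]; rewrite cats0. Qed.

Lemma pres_eq_winv u v : E u v -> E (winv u) (winv v).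
Proof.
elim=> {u v} [u|u v _ IH|u v w _ IH1 _ IH2|u v x|u v].
- reflexivity.
- by symmetry.
- by transitivity (winv v).
- rewrite -[x :: _]/([:: x; ltr_inv x] ++ v) !winv_cat (winv_cat [:: x]) -catA.
  by rewrite cancel_winvl.
- have winv_rel : E (winv l) (winv r).
    rewrite -[X in E X _]cats0 -(cat_winvr r) -(pe_rel l r (winv l) (winv r)).
    by rewrite cancel_winvl.
  by rewrite !winv_cat winv_rel.
Qed.

#[global] Instance wpow_Proper : Proper (E ==> eq ==> E) wpow.
Proof.
have wpow_nat_E u v k : E u v -> E (wpow_nat u k) (wpow_nat v k).
  by move=> H; elim: k => [|k IH] /=; last exact: pres_eq_cat.
move=> u v H z _ <-; case: z => k; apply: wpow_nat_E => //; exact: pres_eq_winv.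
Qed.

Lemma wpow_conj g w z : E (wpow (g ++ w ++ winv g) z) (g ++ wpow w z ++ winv g).
Proof.
have wpow_nat_conj u k : E (wpow_nat (g ++ u ++ winv g) k) (g ++ wpow_nat u k ++ winv g).
  elim: k => [|k IH] /=; first by rewrite cat_winvr.
  by rewrite IH -!catA cancel_winvl.
case: z => k; first exact: wpow_nat_conj.
by rewrite /wpow !winv_cat winvK -catA wpow_nat_conj.
Qed.

Lemma wpow_rotate g h z : E (wpow (winv g ++ h) z) (winv g ++ wpow (h ++ winv g) z ++ g).
Proof.
have -> : E (winv g ++ h) (winv g ++ (h ++ winv g) ++ winv (winv g)).
  by rewrite winvK -!catA cat_winvl cats0.
by rewrite wpow_conj winvK.
Qed.

Lemma wpow_commute w z t : E (w ++ wpow w z ++ t) (wpow w z ++ w ++ t).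
Proof.
rewrite !catA; apply: pres_eq_cat => //; case: z => k; rewrite /wpow.
  by rewrite -wpow_natSr.
transitivity (wpow_nat (winv w) k); first exact: cancel_winvr.
by rewrite wpow_natSr -catA cat_winvl cats0.
Qed.

Lemma wpow_addr1 w z : E (wpow w (z + 1)) (w ++ wpow w z).
Proof.
case: z => [k|[|k]].
- by have -> : Posz k + 1 = Posz k.+1 by rewrite -addn1 PoszD.
- by rewrite /= cats0 cat_winvr.
- have -> : Negz k.+1 + 1 = Negz k by rewrite !NegzE; lia.
  by rewrite /= cancel_winvr.
Qed.

End PresEq.

Notation free_eq := (pres_eq [::] [::]).

Lemma pres_eq_of_free l r u v : free_eq u v -> pres_eq l r u v.
Proof.
elim=> {u v} [u|u v _ IH|u v w _ IH1 _ IH2|u v x|u v] //.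
- exact: pe_sym.
- exact: pe_trans IH2.
- exact: pe_free.
Qed.

Lemma pres_eq_sub L R L' R' :
  pres_eq L' R' L R -> forall u v, pres_eq L R u v -> pres_eq L' R' u v.
Proof.
move=> H u v; elim=> {u v} [u|u v _ IH|u v w _ IH1 _ IH2|u v x|u v] //.
- exact: pe_sym.
- exact: pe_trans IH2.
- exact: pe_free.
- exact: pres_eq_ctx.
Qed.

Lemma pres_eq_conj_relators L R P Q s t :
  free_eq L (s ++ P ++ t) -> free_eq R (s ++ Q ++ t) ->
  forall u v, pres_eq L R u v <-> pres_eq P Q u v.
Proof.
move=> HL HR u v; split; apply: pres_eq_sub.
  by rewrite (pres_eq_of_free P Q HL) (pres_eq_of_free P Q HR); exact: pe_rel.
have unconj w : pres_eq L R w (winv s ++ (s ++ w ++ t) ++ winv t).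
  by rewrite -!catA cancel_winvl cat_winvr cats0.
rewrite (unconj P) (unconj Q) -(pres_eq_of_free L R HL) -(pres_eq_of_free L R HR).
apply: pres_eq_cat => //; apply: pres_eq_cat => //.
by have := pe_rel L R [::] [::]; rewrite !cats0.
Qed.

Section DoubleTwist.
Variables (A B : word) (m n : int).
Notation x := (A ++ winv B).
Notation c := (wpow (A ++ winv B) m).
Notation W := (wpow (A ++ winv B) m ++ A ++ B ++ wpow (winv A ++ B) m).
Notation Wn := (wpow W n).

Lemma winv_c : winv c = wpow (B ++ winv A) m.
Proof. by rewrite winv_wpow winv_cat winvK. Qed.

Lemma W_freeE : free_eq W (c ++ A ++ winv c ++ B).
Proof.
by rewrite wpow_rotate (catA B) wpow_commute -!catA cat_winvl cats0 -winv_c.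
Qed.

Lemma W_freeE' : free_eq W (x ++ c ++ B ++ winv c ++ B).
Proof. by rewrite W_freeE wpow_commute -!catA cancel_winvl. Qed.

Lemma aWnb_conj : free_eq (A ++ Wn ++ B) (x ++ (B ++ Wn ++ B) ++ [::]).
Proof. by rewrite cats0 -!catA cancel_winvl. Qed.

Lemma Wpow_succ_conj : free_eq (wpow W (n + 1)) (x ++ (c ++ B ++ winv c ++ B ++ Wn) ++ [::]).
Proof. by rewrite cats0 wpow_addr1 W_freeE' -!catA. Qed.

Lemma Wnc_conj : free_eq (Wn ++ c) (winv B ++ (B ++ Wn ++ B) ++ (winv B ++ c)).
Proof. by rewrite -!catA cancel_winvl cancel_winvr. Qed.

Hypotheses (revA : wrev A = A) (revB : wrev B = B).

Lemma wrev_c : free_eq (wrev c) (winv B ++ c ++ B).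
Proof. by rewrite wrev_wpow wrev_cat wrev_winv revA revB wpow_rotate. Qed.

Lemma wrev_W : free_eq (wrev W) ((winv c ++ B) ++ W ++ winv (winv c ++ B)).
Proof.
rewrite !wrev_cat wrev_c wrev_wpow wrev_cat wrev_winv revA revB -winv_c.
rewrite winv_cat winvK W_freeE -!catA (cancel_winvr B) cat_winvl cats0.
by rewrite (catA A) wpow_commute -!catA cat_winvl cats0.
Qed.

Lemma wrev_Wnc_conj :
  free_eq (wrev (Wn ++ c)) (winv B ++ (c ++ B ++ winv c ++ B ++ Wn) ++ (winv B ++ c)).
Proof.
rewrite wrev_cat wrev_c wrev_wpow wrev_W wpow_conj (winv_cat (winv c)) winvK.
by rewrite -!catA.
Qed.

End DoubleTwist.

Theorem lemma3p2 (m n : int) :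
  forall u v : word,
    pres_eq (wa ++ wpow (w_k m) n ++ wb) (wpow (w_k m) (n + 1)) u v <->
    pres_eq (r_word m n) (wrev (r_word m n)) u v.
Proof.
move=> u v.
rewrite (pres_eq_conj_relators (@aWnb_conj wa wb m n) (@Wpow_succ_conj wa wb m n)).
by rewrite (pres_eq_conj_relators (@Wnc_conj wa wb m n) (@wrev_Wnc_conj wa wb m n erefl erefl)).
Qed.
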